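(* Let $Y\subset D_2(H)$ be the subgroup generated by all $T(a_i,a_j;a_k,a_l)$, all $⑦_{i,j,k,l}:=T(a_i,a_j;b_k,a_l)$ ($1\le i,j,k,l\le g$) and all $⑧_{i,j}:=a_i\odot a_j$ ($i\ne j$), and let $P:=\operatorname{Ker}(\operatorname{Tr}^{as}|_Y:Y\to\Lambda^2(H/2H))$ (the image lies in the span of the $a_i\wedge a_j$ mod 2). Then $P$ is generated by: all $T(a_i,a_j;a_k,a_l)$; all $⑦_{i,j,k,l}$ with $k\notin\{i,j,l\}$; all $⑦_{i,k,k,i}$ with $i\ne k$; and, for both choices of sign, the elements $$⑦_{i,k,k,m}\pm⑦_{m,k,k,i},\qquad ⑦_{i,k,k,l}\pm⑦_{i,k',k',l},\qquad ⑦_{i,k,k,l}\pm⑧_{i,l},$$ where $i\notin\{k,k',l\}$ and $m\ne k$.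
   Context: Let $g\ge 2$, $\Sigma_{g,1}$ a compact connected oriented surface of genus $g$ with one boundary component, $H=H_1(\Sigma_{g,1};\mathbb Z)$ with intersection form $\omega$, $\mathcal L(H)$ the free Lie ring on $H$ embedded in $T(H)$ via $[x,y]=x\otimes y-y\otimes x$, $D_2(H):=\ker(H\otimes\mathcal L_3(H)\to\mathcal L_4(H),\ h\otimes u\mapsto[h,u])$. Fix a symplectic basis $(a_1,\dots,a_g,b_1,\dots,b_g)$ of $H$ ($\omega(a_i,b_j)=\delta_{ij}$, $\omega(a_i,a_j)=\omega(b_i,b_j)=0$). For $a,b,c,d\in H$, $T(a,b;c,d):=a\otimes[b,[c,d]]+b\otimes[[c,d],a]+c\otimes[d,[a,b]]+d\otimes[[a,b],c]$ and $a\odot b:=a\otimes[b,[a,b]]+b\otimes[[a,b],a]$ (both in $D_2(H)$). $\operatorname{Tr}^{as}:D_2(H)\to\Lambda^2(H/2H)$ is the homomorphism $T(a,b;c,d)\mapsto\omega(a,d)\,b\wedge c+\omega(a,c)\,b\wedge d+\omega(b,d)\,a\wedge c+\omega(b,c)\,a\wedge d$, $a\odot b\mapsto(1+\omega(a,b))\,a\wedge b$ (coefficients mod 2). *)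

From mathcomp Require Import all_boot all_order all_algebra.
Set Implicit Arguments. Unset Strict Implicit. Unset Printing Implicit Defensive.
Import GRing.Theory.
Local Open Scope ring_scope.

(* H = H_1(Sigma_{g,1}; Z) = Z^(g+g), coordinates indexed by 'I_(g+g):
   index [lshift g i] is the coefficient of a_(i+1), [rshift g i] that of b_(i+1). *)
Definition Hg (g : nat) := {ffun 'I_(g + g) -> int}.

Definition avec (g : nat) (i : 'I_g) : Hg g := [ffun j => ((j == lshift g i) : nat)%:R].
Definition bvec (g : nat) (i : 'I_g) : Hg g := [ffun j => ((j == rshift g i) : nat)%:R].

Definition omega (g : nat) (x y : Hg g) : int :=
  \sum_(i < g) (x (lshift g i) * y (rshift g i) - x (rshift g i) * y (lshift g i)).

(* H^{(x)4} = Z^((g+g)^4); H (x) L_3(H) and D_2(H) are subgroups of it via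
   L(H) -> T(H), [x,y] = x(x)y - y(x)x (injective, H free). *)
Definition idx4 (g : nat) := ('I_(g + g) * 'I_(g + g) * 'I_(g + g) * 'I_(g + g))%type.
Definition T4 (g : nat) := {ffun idx4 g -> int}.

Definition t4 (g : nat) (x y z w : Hg g) : T4 g :=
  [ffun t => let: (i, j, k, l) := t in x i * y j * z k * w l].

(* lb3 h y z w = h (x) [y,[z,w]] *)
Definition lb3 (g : nat) (h y z w : Hg g) : T4 g :=
  t4 h y z w - t4 h y w z - t4 h z w y + t4 h w z y.

(* T(a,b;c,d) = a(x)[b,[c,d]] + b(x)[[c,d],a] + c(x)[d,[a,b]] + d(x)[[a,b],c] *)
Definition Tel (g : nat) (a b c d : Hg g) : T4 g :=
  lb3 a b c d - lb3 b a c d + lb3 c d a b - lb3 d c a b.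

(* a (.) b = a(x)[b,[a,b]] + b(x)[[a,b],a] *)
Definition odot (g : nat) (a b : Hg g) : T4 g := lb3 a b a b - lb3 b a a b.

Inductive gen (A : zmodType) (G : A -> Prop) : A -> Prop :=
| gen0 : gen G 0
| genG x : G x -> gen G x
| genB x y : gen G x -> gen G y -> gen G (x - y).

Definition HL3 (g : nat) (x : T4 g) : Prop :=
  gen (fun t => exists h y z w : Hg g, t = lb3 h y z w) x.

(* D_2(H) = ker(H (x) L_3 -> L_4, h(x)u |-> [h,u] = h(x)u - u(x)h) *)
Definition D2 (g : nat) (x : T4 g) : Prop :=
  HL3 x /\ forall i j k l, x (i, j, k, l) = x (l, i, j, k).

(* Lambda^2(H/2H) modelled (isomorphically) by alternating (g+g)x(g+g) matrices
   over F_2, with u /\ v |-> u v^T - v u^T. *)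
Definition L2 (g : nat) := 'M['F_2]_(g + g).

Definition wedge (g : nat) (u v : Hg g) : L2 g :=
  \matrix_(i, j) ((u i)%:~R * (v j)%:~R - (u j)%:~R * (v i)%:~R).

Definition is_Tras (g : nat) (Tr : T4 g -> L2 g) : Prop :=
  (forall x y, D2 x -> D2 y -> Tr (x + y) = Tr x + Tr y) /\
  (forall a b c d : Hg g,
      Tr (Tel a b c d) =
        (omega a d)%:~R *: wedge b c + (omega a c)%:~R *: wedge b d
      + (omega b d)%:~R *: wedge a c + (omega b c)%:~R *: wedge a d) /\
  (forall a b : Hg g, Tr (odot a b) = (1 + omega a b)%:~R *: wedge a b).

Definition c7 (g : nat) (i j k l : 'I_g) : T4 g :=
  Tel (avec i) (avec j) (bvec k) (avec l).
Definition c8 (g : nat) (i j : 'I_g) : T4 g := odot (avec i) (avec j).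

Definition Ygen (g : nat) (x : T4 g) : Prop :=
  (exists i j k l : 'I_g, x = Tel (avec i) (avec j) (avec k) (avec l)) \/
  (exists i j k l : 'I_g, x = c7 i j k l) \/
  (exists i j : 'I_g, i != j /\ x = c8 i j).

Definition Yset (g : nat) (x : T4 g) : Prop := gen (@Ygen g) x.

Definition Pgen (g : nat) (x : T4 g) : Prop :=
  (exists i j k l : 'I_g, x = Tel (avec i) (avec j) (avec k) (avec l)) \/
  (exists i j k l : 'I_g, [/\ k != i, k != j, k != l & x = c7 i j k l]) \/
  (exists i k : 'I_g, i != k /\ x = c7 i k k i) \/
  (exists i k m : 'I_g, [/\ i != k, m != k &
       (x = c7 i k k m + c7 m k k i \/ x = c7 i k k m - c7 m k k i)]) \/
  (exists i k k' l : 'I_g, [/\ i != k, i != k', i != l &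
       (x = c7 i k k l + c7 i k' k' l \/ x = c7 i k k l - c7 i k' k' l)]) \/
  (exists i k l : 'I_g, [/\ i != k, i != l &
       (x = c7 i k k l + c8 i l \/ x = c7 i k k l - c8 i l)]).

From mathcomp Require Import all_boot all_order all_algebra ring.
Set Implicit Arguments. Unset Strict Implicit. Unset Printing Implicit Defensive.
Import GRing.Theory.
Local Open Scope ring_scope.

(* (<-) Every element of Pgen lies in Y and has trace 0: the traces of the
   generators of Y follow from omega(a_i,a_j) = 0 and omega(a_i,b_k) = delta_ik,
   and in each combination u +/- v the two summands have the same trace, so
   the sum vanishes mod 2.  As Y lies in D_2(H), where Tr^as is additive, the
   whole subgroup <Pgen> lies in P.

   (->) We build a section of Tr^as modulo <Pgen>: [lift8] sends an alternating
   matrix M over F_2 to the sum of the (8)_{i,l} over i < l with M(a_i,a_l) = 1.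
   It maps a_i /\ a_l to (8)_{i,l}, and it is additive modulo <Pgen> because
   2 (8)_{i,l} = ((7)_{i,l,l,l} + (8)_{i,l}) - ((7)_{i,l,l,l} - (8)_{i,l}).
   Call y "lifted" when y - lift8 (Tr y) lies in <Pgen>.  The lifted elements
   of D_2(H) form a subgroup, and a case analysis on the coincidences among the
   indices shows that every generator of Y is lifted.  Hence every x in Y is
   lifted, and when Tr x = 0 this says x = x - lift8 0 lies in <Pgen>. *)

Section GeneratedSubgroup.
Variables (A : zmodType) (G : A -> Prop).

Lemma gen_opp x : gen G x -> gen G (- x).
Proof. by move=> hx; rewrite -sub0r; apply: genB => //; apply: gen0. Qed.

Lemma gen_add x y : gen G x -> gen G y -> gen G (x + y).
Proof. by move=> hx hy; rewrite -(opprK y); apply: genB => //; apply: gen_opp. Qed.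

Lemma gen_sum (I : finType) (P : pred I) (F : I -> A) :
  (forall i, P i -> gen G (F i)) -> gen G (\sum_(i | P i) F i).
Proof. by move=> hF; apply: (big_ind (gen G)); [apply: gen0|apply: gen_add|]. Qed.

End GeneratedSubgroup.

Section TensorIdentities.
Variables (g : nat) (a b c d : Hg g).

Lemma Tel_swap : Tel b a c d = - Tel a b c d.
Proof. by apply/ffunP => [[[[i j] k] l]]; rewrite /Tel /lb3 /t4 !ffunE /=; ring. Qed.

Lemma Tel_diag : Tel a a c d = 0.
Proof. by apply/ffunP => [[[[i j] k] l]]; rewrite /Tel /lb3 /t4 !ffunE /=; ring. Qed.

Lemma Tel_jacobi : Tel a b c d = Tel a d c b - Tel b d c a.
Proof. by apply/ffunP => [[[[i j] k] l]]; rewrite /Tel /lb3 /t4 !ffunE /=; ring. Qed.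

Lemma odotC : odot a b = odot b a.
Proof. by apply/ffunP => [[[[i j] k] l]]; rewrite /odot /lb3 /t4 !ffunE /=; ring. Qed.

End TensorIdentities.

Section D2Subgroup.
Variable g : nat.

Lemma D2_0 : D2 (0 : T4 g).
Proof. by split=> [|*]; [apply: gen0|rewrite !ffunE]. Qed.

Lemma D2B (x y : T4 g) : D2 x -> D2 y -> D2 (x - y).
Proof.
move=> [hx cx] [hy cy]; split=> [|i j k l]; first exact: genB.
by rewrite !ffunE cx cy.
Qed.

Lemma HL3_lb3 (h y z w : Hg g) : HL3 (lb3 h y z w).
Proof. by apply: genG; exists h, y, z, w. Qed.

Lemma D2_Tel (a b c d : Hg g) : D2 (Tel a b c d).
Proof.
split=> [|i j k l]; last by rewrite /Tel /lb3 /t4 !ffunE /=; ring.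
by apply: genB; [apply: gen_add; [apply: genB|]|]; apply: HL3_lb3.
Qed.

Lemma D2_odot (a b : Hg g) : D2 (odot a b).
Proof.
split=> [|i j k l]; first by apply: genB; apply: HL3_lb3.
by rewrite /odot /lb3 /t4 !ffunE /=; ring.
Qed.

Lemma Y_D2 (x : T4 g) : Yset x -> D2 x.
Proof.
elim=> [|y [[i [j [k [l ->]]]]|[[i [j [k [l ->]]]]|[i [j [_ ->]]]]]|y z _ ? _ ?].
- exact: D2_0.
- exact: D2_Tel.
- exact: D2_Tel.
- exact: D2_odot.
- exact: D2B.
Qed.

Lemma Y_Ta (i j k l : 'I_g) : Yset (Tel (avec i) (avec j) (avec k) (avec l)).
Proof. by apply: genG; left; exists i, j, k, l. Qed.

Lemma Y_c7 (i j k l : 'I_g) : Yset (c7 i j k l).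
Proof. by apply: genG; right; left; exists i, j, k, l. Qed.

Lemma Y_c8 (i j : 'I_g) : i != j -> Yset (c8 i j).
Proof. by move=> ij; apply: genG; right; right; exists i, j. Qed.

End D2Subgroup.

Section SymplecticBasis.
Variable g : nat.

Lemma avec_a (i j : 'I_g) : avec i (lshift g j) = ((j == i) : nat)%:R.
Proof. by rewrite ffunE eq_lshift. Qed.

Lemma avec_b (i j : 'I_g) : avec i (rshift g j) = 0.
Proof. by rewrite ffunE eq_rlshift. Qed.

Lemma bvec_b (i j : 'I_g) : bvec i (rshift g j) = ((j == i) : nat)%:R.
Proof. by rewrite ffunE eq_rshift. Qed.

Lemma omega_aa (i j : 'I_g) : omega (avec i) (avec j) = 0.
Proof. by rewrite /omega big1 // => k _; rewrite !avec_b !mulr0 !mul0r subrr. Qed.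

Lemma omega_ab (i k : 'I_g) : omega (avec i) (bvec k) = ((i == k) : nat)%:R.
Proof.
rewrite /omega (bigD1 i) //= big1 => [|j /negbTE ji].
  by rewrite avec_a bvec_b avec_b eqxx mul0r subr0 mul1r addr0.
by rewrite avec_a ji avec_b !mul0r subrr.
Qed.

End SymplecticBasis.

Section Mod2.
Variable g : nat.

Lemma pchar_F2 : 2 \in [pchar 'F_2].
Proof. exact: pchar_Fp. Qed.

Lemma L2_add_self (M : L2 g) : M + M = 0.
Proof. by apply/matrixP => i j; rewrite !mxE (addrr_pchar2 pchar_F2). Qed.

Lemma wedgeC (u v : Hg g) : wedge v u = wedge u v.
Proof.
apply/matrixP => i j; rewrite !mxE -[LHS](oppr_pchar2 pchar_F2) opprB.
by rewrite (mulrC (u j)%:~R) (mulrC (u i)%:~R).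
Qed.

Lemma wedge_diag (u : Hg g) : wedge u u = 0.
Proof. by apply/matrixP => i j; rewrite !mxE mulrC subrr. Qed.

Lemma wedge_aa_upper (i0 l0 i l : 'I_g) : (i0 < l0)%N -> (i < l)%N ->
  (wedge (avec i0) (avec l0) (lshift g i) (lshift g l) == 1) = (i == i0) && (l == l0).
Proof.
move=> lt0 lt; rewrite mxE !avec_a.
have : ~~ ((l == i0) && (i == l0)).
  by apply/andP=> [[/eqP li /eqP il]]; move: lt; rewrite li il ltnNge ltnW.
by case: (i == i0); case: (l == l0); case: (l == i0); case: (i == l0).
Qed.

End Mod2.

Section Trace.
Variables (g : nat) (Tr : T4 g -> L2 g).
Hypothesis HTr : is_Tras Tr.

Lemma TrD x y : D2 x -> D2 y -> Tr (x + y) = Tr x + Tr y.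
Proof. by case: HTr => Hadd _; apply: Hadd. Qed.

Lemma TrB x y : D2 x -> D2 y -> Tr (x - y) = Tr x - Tr y.
Proof.
by move=> hx hy; have := TrD (D2B hx hy) hy; rewrite subrK => ->; rewrite addrK.
Qed.

Lemma Tr0 : Tr 0 = 0.
Proof. by have := TrB (@D2_0 g) (@D2_0 g); rewrite !subrr. Qed.

(* The traces of the generators: only omega(a_i,b_k) = delta_ik can contribute. *)
Lemma Tr_Ta (i j k l : 'I_g) : Tr (Tel (avec i) (avec j) (avec k) (avec l)) = 0.
Proof. by case: HTr => _ [HT _]; rewrite HT !omega_aa !scale0r !addr0. Qed.

Lemma Tr_c7 (i j k l : 'I_g) : Tr (c7 i j k l) =
  (if i == k then wedge (avec j) (avec l) else 0) +
  (if j == k then wedge (avec i) (avec l) else 0).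
Proof.
case: HTr => _ [HT _]; rewrite /c7 HT !omega_aa !omega_ab !scale0r add0r addr0.
by case: (i == k); case: (j == k); rewrite ?scale1r ?scale0r.
Qed.

Lemma Tr_c7kk (i k l : 'I_g) : i != k -> Tr (c7 i k k l) = wedge (avec i) (avec l).
Proof. by move=> ik; rewrite Tr_c7 (negbTE ik) eqxx add0r. Qed.

Lemma Tr_c8 (i j : 'I_g) : Tr (c8 i j) = wedge (avec i) (avec j).
Proof. by case: HTr => _ [_ Ho]; rewrite /c8 Ho omega_aa addr0 scale1r. Qed.

End Trace.

Section PgenInKernel.
Variables (g : nat) (Tr : T4 g -> L2 g).
Hypothesis HTr : is_Tras Tr.

Definition inP (x : T4 g) : Prop := Yset x /\ Tr x = 0.

Lemma inP_sub x y : inP x -> inP y -> inP (x - y).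
Proof.
move=> [Yx Tx] [Yy Ty]; split; first exact: genB.
by rewrite (TrB HTr) ?Tx ?Ty ?subrr //; apply: Y_D2.
Qed.

Lemma inP_pm u v x : Yset u -> Yset v -> Tr u = Tr v ->
  (x = u + v \/ x = u - v) -> inP x.
Proof.
move=> Yu Yv Tuv [->|->]; split; try exact: gen_add; try exact: genB.
  by rewrite (TrD HTr) ?Tuv ?L2_add_self //; apply: Y_D2.
by rewrite (TrB HTr) ?Tuv ?subrr //; apply: Y_D2.
Qed.

Lemma Pgen_inP x : Pgen x -> inP x.
Proof.
case=> [[i [j [k [l ->]]]]|[[i [j [k [l [ki kj kl ->]]]]]|[[i [k [ik ->]]]|[H|[H|H]]]]].
- by split; [apply: Y_Ta|apply: (Tr_Ta HTr)].
- split; first exact: Y_c7.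
  by rewrite (Tr_c7 HTr) eq_sym (negbTE ki) eq_sym (negbTE kj) addr0.
- by split; [apply: Y_c7|rewrite (Tr_c7kk HTr _ ik) wedge_diag].
- move: H => [i [k [m [ik mk]]]]; apply: inP_pm; try exact: Y_c7.
  by rewrite !(Tr_c7kk HTr) // wedgeC.
- move: H => [i [k [k' [l [ik ik' _]]]]]; apply: inP_pm; try exact: Y_c7.
  by rewrite !(Tr_c7kk HTr).
- move: H => [i [k [l [ik il]]]]; apply: inP_pm; [apply: Y_c7|exact: Y_c8|].
  by rewrite (Tr_c7kk HTr) // (Tr_c8 HTr).
Qed.

Lemma genPgen_inP x : gen (@Pgen g) x -> inP x.
Proof.
elim=> [|y /Pgen_inP //|y z _ ? _ ?]; last exact: inP_sub.
by split; [apply: gen0|apply: (Tr0 HTr)].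
Qed.

End PgenInKernel.

Definition lift8 (g : nat) (M : L2 g) : T4 g :=
  \sum_(i < g) \sum_(l < g)
    (if (i < l)%N && (M (lshift g i) (lshift g l) == 1) then c8 i l else 0).

Section Lift.
Variable g : nat.

Lemma lift8_0 : lift8 (0 : L2 g) = 0.
Proof. by rewrite /lift8 big1 // => i _; rewrite big1 // => l _; rewrite mxE andbF. Qed.

Lemma lift8_wedge (i0 l0 : 'I_g) : i0 != l0 -> lift8 (wedge (avec i0) (avec l0)) = c8 i0 l0.
Proof.
wlog lt0 : i0 l0 / (i0 < l0)%N => [W ne|_].
  have [lt|gt|eq] := ltngtP i0 l0; first exact: W.
    by rewrite wedgeC /c8 odotC W // eq_sym.
  by move: ne; rewrite (val_inj eq) eqxx.
have term (i l : 'I_g) :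
  (if (i < l)%N && (wedge (avec i0) (avec l0) (lshift g i) (lshift g l) == 1)
   then c8 i l else 0) = if (i == i0) && (l == l0) then c8 i0 l0 else 0.
  case: (ltnP i l) => [lt|ge].
    by rewrite wedge_aa_upper //; case: (eqVneq i i0) => [->|]; case: (eqVneq l l0) => [->|].
  case: (eqVneq i i0) => [ei|//]; case: (eqVneq l l0) => [el|//].
  by move: ge; rewrite ei el leqNgt lt0.
have row (i : 'I_g) : \sum_(l < g) (if (i == i0) && (l == l0) then c8 i0 l0 else 0)
                     = if i == i0 then c8 i0 l0 else 0.
  by case: (i == i0); [rewrite -big_mkcond big_pred1_eq|rewrite big1].
rewrite /lift8; under eq_bigr do under eq_bigr do rewrite term.
by under eq_bigr do rewrite row; rewrite -big_mkcond big_pred1_eq.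
Qed.

Lemma gen_two_c8 (i l : 'I_g) : i != l -> gen (@Pgen g) (c8 i l + c8 i l).
Proof.
move=> il; have -> : c8 i l + c8 i l = (c7 i l l l + c8 i l) - (c7 i l l l - c8 i l).
  by apply/esym; rewrite opprB addrC addrA subrK.
by apply: genB; apply: genG; do 5 right; exists i, l, l; split => //; [left|right].
Qed.

Lemma lift8_sub (M N : L2 g) : gen (@Pgen g) (lift8 M - lift8 N - lift8 (M - N)).
Proof.
rewrite /lift8 -!sumrB; apply: gen_sum => i _; rewrite -!sumrB; apply: gen_sum => l _.
rewrite !mxE; case: ltnP => il /=; last by rewrite !subr0; apply: gen0.
have [->|->] : M (lshift g i) (lshift g l) = 0 \/ M (lshift g i) (lshift g l) = 1.
  by case: (M _ _) => [[|[|]]] // ?; [left|right]; apply: val_inj.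
all: have [->|->] : N (lshift g i) (lshift g l) = 0 \/ N (lshift g i) (lshift g l) = 1
  by case: (N _ _) => [[|[|]]] // ?; [left|right]; apply: val_inj.
all: rewrite /= ?subr0 ?sub0r ?subrr; try exact: gen0.
by rewrite -opprD; apply/gen_opp/gen_two_c8; rewrite neq_ltn il.
Qed.

End Lift.

Section Lifted.
Variables (g : nat) (Tr : T4 g -> L2 g).
Hypothesis HTr : is_Tras Tr.

Definition lifted (y : T4 g) : Prop := gen (@Pgen g) (y - lift8 (Tr y)).

Lemma lifted_0 : lifted 0.
Proof. by rewrite /lifted (Tr0 HTr) lift8_0 subrr; apply: gen0. Qed.

(* Lifted elements of D_2(H) form a subgroup, since lift8 is additive mod <Pgen>. *)
Lemma lifted_sub y z : D2 y -> D2 z -> lifted y -> lifted z -> lifted (y - z).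
Proof.
move=> Dy Dz ly lz; rewrite /lifted (TrB HTr Dy Dz).
have -> : y - z - lift8 (Tr y - Tr z) = (y - lift8 (Tr y)) - (z - lift8 (Tr z))
    + (lift8 (Tr y) - lift8 (Tr z) - lift8 (Tr y - Tr z)).
  by apply/ffunP => t; rewrite !ffunE; ring.
by apply: gen_add; [apply: genB|apply: lift8_sub].
Qed.

Lemma lifted_opp y : D2 y -> lifted y -> lifted (- y).
Proof. by move=> Dy ly; rewrite -sub0r; apply: lifted_sub (@D2_0 g) Dy lifted_0 ly. Qed.

(* Elements of <Pgen> have trace 0, so they are lifted. *)
Lemma lifted_Pgen y : gen (@Pgen g) y -> lifted y.
Proof. by move=> Py; have [_ T0] := genPgen_inP HTr Py; rewrite /lifted T0 lift8_0 subr0. Qed.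

Lemma lifted_mod_c8 (i l : 'I_g) y : i != l -> D2 y ->
  gen (@Pgen g) (y - c8 i l) -> lifted y.
Proof.
move=> il Dy Py; have [_ T0] := genPgen_inP HTr Py.
have Ty : Tr y = wedge (avec i) (avec l).
  have Dc8 := D2_odot (avec i) (avec l).
  by rewrite -(subrK (c8 i l) y) (TrD HTr (D2B Dy Dc8) Dc8) T0 add0r (Tr_c8 HTr).
by rewrite /lifted Ty lift8_wedge.
Qed.

(* (7)_{i,k,k,l} is in <Pgen> when l = i, and is (8)_{i,l} mod <Pgen> otherwise. *)
Lemma lifted_c7kk (i k l : 'I_g) : i != k -> lifted (c7 i k k l).
Proof.
move=> ik; have [->|li] := eqVneq l i.
  by apply/lifted_Pgen/genG; right; right; left; exists i, k.
apply: (@lifted_mod_c8 i l); [by rewrite eq_sym|exact: D2_Tel|].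
by apply: genG; do 5 right; exists i, k, l; split=> //; [rewrite eq_sym|right].
Qed.

(* Case analysis on the position of k: k = j, k = i (by antisymmetry in the
   first two slots), k = l (by the Jacobi relation), or k outside {i,j,l}. *)
Lemma lifted_c7 (i j k l : 'I_g) : lifted (c7 i j k l).
Proof.
have [->|kj] := eqVneq k j.
  have [->|ij] := eqVneq i j; last exact: lifted_c7kk.
  by apply: lifted_Pgen; rewrite /c7 Tel_diag; apply: gen0.
have [eki|ki] := eqVneq k i.
  subst k; have -> : c7 i j i l = - c7 j i i l by rewrite /c7 Tel_swap.
  by apply: lifted_opp; [apply: D2_Tel|apply: lifted_c7kk; rewrite eq_sym].
apply: lifted_Pgen; apply: genG; have [ekl|kl] := eqVneq k l.
  subst k; rewrite /c7 Tel_jacobi; do 3 right; left.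
  by exists i, l, j; split; [rewrite eq_sym|rewrite eq_sym|right].
by right; left; exists i, j, k, l.
Qed.

Lemma lifted_Ygen y : Ygen y -> lifted y.
Proof.
case=> [[i [j [k [l ->]]]]|[[i [j [k [l ->]]]]|[i [j [ij ->]]]]].
- by apply/lifted_Pgen/genG; left; exists i, j, k, l.
- exact: lifted_c7.
- by rewrite /lifted (Tr_c8 HTr) lift8_wedge // subrr; apply: gen0.
Qed.

Lemma lifted_Y y : Yset y -> lifted y.
Proof.
elim=> [|z /lifted_Ygen //|y1 y2 Y1 l1 Y2 l2]; first exact: lifted_0.
exact: lifted_sub (Y_D2 Y1) (Y_D2 Y2) l1 l2.
Qed.

End Lifted.

Theorem proposition5p7 (g : nat) (hg : (2 <= g)%N) (Tr : T4 g -> L2 g) :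
  is_Tras Tr ->
  forall x : T4 g, (Yset x /\ Tr x = 0) <-> gen (@Pgen g) x.
Proof.
move=> HTr x; split; last exact: genPgen_inP.
move=> [Yx Tx]; have := lifted_Y HTr Yx.
by rewrite /lifted Tx lift8_0 subr0.
Qed.
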